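(* Let $(A,B,\alpha)$ be a topological crossed module. Let $L=\{[\gamma]\in\pi A:\gamma(0)=0\}$, $M=\{[\beta]\in\pi B:\beta(0)=0\}$, $N=A$, $P=B$, with $\lambda[\gamma]=[\alpha\circ\gamma]$, $\lambda'[\gamma]=\gamma(1)$, $\mu[\beta]=\beta(1)$, $\nu=\alpha$. Let $P=B$ act on $N=A$ by the given action, on $L$ by $b\cdot[\gamma]=[r\mapsto b\cdot\gamma(r)]$, and on $M$ by $b\cdot[\beta]=[r\mapsto b+\beta(r)-b]$, and define $h:M\times N\to L$ by $h([\beta],a)=[r\mapsto\beta(r)\cdot a-a]$. Then $(L,M,N,P)$ with these data is a crossed square.
   Context: Groups are written additively. A crossed module $(A,B,\alpha)$: groups $A,B$, a left action of $B$ on $A$ by automorphisms, a homomorphism $\alpha:A\to B$ with $\alpha(b\cdot a)=b+\alpha(a)-b$ and $\alpha(a)\cdot a'=a+a'-a$. A topological crossed module is a crossed module in which $A,B$ are topological groups and $\alpha$ and the action are continuous. For a topological group $X$, $\pi X$ is the set of homotopy classes rel endpoints of paths $[0,1]\to X$, a group under pointwise addition. A crossed square: homomorphisms $\lambda:L\to M$, $\lambda':L\to N$, $\mu:M\to P$, $\nu:N\to P$ with $\nu\lambda'=\mu\lambda$, left actions of $P$ on $L,M,N$ (inducing actions of $M$ on $L,N$ via $\mu$ and of $N$ on $L,M$ via $\nu$, e.g. $m\cdot n=\mu(m)\cdot n$), and a function $h:M\times N\to L$, such that (i) $\lambda,\lambda'$ are $P$-equivariant and $\mu$, $\nu$, $\mu\lambda$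 are crossed modules; (ii) $\lambda h(m,n)=m+n\cdot(-m)$, $\lambda'h(m,n)=m\cdot n-n$; (iii) $h(\lambda(l),n)=l+n\cdot(-l)$, $h(m,\lambda'(l))=m\cdot l-l$; (iv) $h(m+m',n)=m\cdot h(m',n)+h(m,n)$, $h(m,n+n')=h(m,n)+n\cdot h(m,n')$; (v) $h(p\cdot m,p\cdot n)=p\cdot h(m,n)$, for all $l\in L$, $m,m'\in M$, $n,n'\in N$, $p\in P$. *)

From Stdlib Require Import Reals Lra ClassicalEpsilon.
Open Scope R_scope.

Definition is_topology {X : Type} (O : (X -> Prop) -> Prop) : Prop :=
  O (fun _ => True) /\
  (forall F : (X -> Prop) -> Prop, (forall U, F U -> O U) ->
      O (fun x => exists U, F U /\ U x)) /\
  (forall U V, O U -> O V -> O (fun x => U x /\ V x)).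

Definition continuous {X Y : Type} (OX : (X -> Prop) -> Prop)
  (OY : (Y -> Prop) -> Prop) (f : X -> Y) : Prop :=
  forall V, OY V -> OX (fun x => V (f x)).

Definition open_prod {X Y : Type} (OX : (X -> Prop) -> Prop)
  (OY : (Y -> Prop) -> Prop) (W : X * Y -> Prop) : Prop :=
  forall p, W p -> exists U V, OX U /\ OY V /\ U (fst p) /\ V (snd p) /\
    (forall q, U (fst q) -> V (snd q) -> W q).

Definition open_R (W : R -> Prop) : Prop :=
  forall x, W x -> exists eps, 0 < eps /\ forall y, Rabs (y - x) < eps -> W y.

Definition I := { r : R | 0 <= r <= 1 }.
Lemma I0_prf : 0 <= 0 <= 1. Proof. lra. Qed.
Lemma I1_prf : 0 <= 1 <= 1. Proof. lra. Qed.
Definition I0 : I := exist _ 0 I0_prf.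
Definition I1 : I := exist _ 1 I1_prf.
Definition open_I (U : I -> Prop) : Prop :=
  exists W, open_R W /\ forall r : I, U r <-> W (proj1_sig r).

Lemma const_continuous {X : Type} (OX : (X -> Prop) -> Prop) (c : X) :
  continuous open_I OX (fun _ => c).
Proof.
  intros V _. exists (fun _ => V c). split.
  - intros x Hx. exists 1. split; [lra| intros; exact Hx].
  - intros r; tauto.
Qed.

(* paths homotopic rel endpoints; first coordinate = path parameter,
   second coordinate = homotopy parameter *)
Definition homotopic {X : Type} (OX : (X -> Prop) -> Prop) (g d : I -> X) : Prop :=
  exists H : I * I -> X, continuous (open_prod open_I open_I) OX H /\
    (forall s, H (s, I0) = g s) /\ (forall s, H (s, I1) = d s) /\
    (forall t, H (I0, t) = g I0) /\ (forall t, H (I1, t) = g I1).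

(* ---------- Groups (written additively, not necessarily abelian) ---------- *)
Record GroupData := { gcar :> Type; gadd : gcar -> gcar -> gcar;
                      gopp : gcar -> gcar; gzero : gcar }.
Arguments gadd {g}. Arguments gopp {g}. Arguments gzero {g}.

Definition is_group (G : GroupData) : Prop :=
  (forall x y z : G, gadd x (gadd y z) = gadd (gadd x y) z) /\
  (forall x : G, gadd gzero x = x /\ gadd x gzero = x) /\
  (forall x : G, gadd (gopp x) x = gzero /\ gadd x (gopp x) = gzero).

Definition is_hom {G H : GroupData} (f : G -> H) : Prop :=
  forall x y, f (gadd x y) = gadd (f x) (f y).

Definition crossed_module (A B : GroupData) (act : B -> A -> A) (alpha : A -> B) : Prop :=
  is_group A /\ is_group B /\
  (forall a, act gzero a = a) /\
  (forall b b' a, act (gadd b b') a = act b (act b' a)) /\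
  (forall b a a', act b (gadd a a') = gadd (act b a) (act b a')) /\
  is_hom alpha /\
  (forall b a, alpha (act b a) = gadd (gadd b (alpha a)) (gopp b)) /\
  (forall a a', act (alpha a) a' = gadd (gadd a a') (gopp a)).

Definition topological_crossed_module (A B : GroupData)
  (OA : (A -> Prop) -> Prop) (OB : (B -> Prop) -> Prop)
  (act : B -> A -> A) (alpha : A -> B) : Prop :=
  crossed_module A B act alpha /\ is_topology OA /\ is_topology OB /\
  continuous (open_prod OA OA) OA (fun p => gadd (fst p) (snd p)) /\
  continuous OA OA (@gopp A) /\
  continuous (open_prod OB OB) OB (fun p => gadd (fst p) (snd p)) /\
  continuous OB OB (@gopp B) /\
  continuous OA OB alpha /\
  continuous (open_prod OB OA) OA (fun p => act (fst p) (snd p)).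

Definition crossed_square (L M N P : GroupData)
  (lam : L -> M) (lam' : L -> N) (mu : M -> P) (nu : N -> P)
  (aL : P -> L -> L) (aM : P -> M -> M) (aN : P -> N -> N)
  (h : M -> N -> L) : Prop :=
  let mN := fun (m : M) (n : N) => aN (mu m) n in
  let mL := fun (m : M) (l : L) => aL (mu m) l in
  let nL := fun (n : N) (l : L) => aL (nu n) l in
  let nM := fun (n : N) (m : M) => aM (nu n) m in
  is_hom lam /\ is_hom lam' /\
  (forall l, nu (lam' l) = mu (lam l)) /\
  (forall p l, lam (aL p l) = aM p (lam l)) /\
  (forall p l, lam' (aL p l) = aN p (lam' l)) /\
  crossed_module M P aM mu /\ crossed_module N P aN nu /\
  crossed_module L P aL (fun l => mu (lam l)) /\
  (forall m n, lam (h m n) = gadd m (nM n (gopp m))) /\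
  (forall m n, lam' (h m n) = gadd (mN m n) (gopp n)) /\
  (forall l n, h (lam l) n = gadd l (nL n (gopp l))) /\
  (forall m l, h m (lam' l) = gadd (mL m l) (gopp l)) /\
  (forall m m' n, h (gadd m m') n = gadd (mL m (h m' n)) (h m n)) /\
  (forall m n n', h m (gadd n n') = gadd (h m n) (nL n (h m n'))) /\
  (forall p m n, h (aM p m) (aN p n) = aL p (h m n)).

Definition path0 {X : Type} (OX : (X -> Prop) -> Prop) (z : X) (g : I -> X) : Prop :=
  continuous open_I OX g /\ g I0 = z.

(* the set {[g] in pi X : g(0) = z}, as the type of homotopy classes *)
Definition Pi0 {X : Type} (OX : (X -> Prop) -> Prop) (z : X) : Type :=
  { C : (I -> X) -> Prop | exists g, path0 OX z g /\ C = homotopic OX g }.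

Definition Pi0_zero {X : Type} (OX : (X -> Prop) -> Prop) (z : X) : Pi0 OX z :=
  exist _ (homotopic OX (fun _ => z))
    (ex_intro _ (fun _ => z) (conj (conj (const_continuous OX z) eq_refl) eq_refl)).

Definition rep {X : Type} {OX : (X -> Prop) -> Prop} {z : X} (x : Pi0 OX z) : I -> X :=
  proj1_sig (constructive_indefinite_description _ (proj2_sig x)).

(* the class [g] of a path g (default value zero if g is not a path from z,
   a case that never occurs in the constructions below) *)
Definition cls {X : Type} (OX : (X -> Prop) -> Prop) (z : X) (g : I -> X) : Pi0 OX z :=
  match excluded_middle_informative (path0 OX z g) with
  | left Hg => exist _ (homotopic OX g) (ex_intro _ g (conj Hg eq_refl))
  | right _ => Pi0_zero OX z
  end.

Definition Pi0Group {X : GroupData} (OX : (X -> Prop) -> Prop) : GroupData :=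
  {| gcar := Pi0 OX gzero;
     gadd := fun x y => cls OX gzero (fun r => gadd (rep x r) (rep y r));
     gopp := fun x => cls OX gzero (fun r => gopp (rep x r));
     gzero := Pi0_zero OX gzero |}.

Section Data.
Variables (A B : GroupData) (OA : (A -> Prop) -> Prop) (OB : (B -> Prop) -> Prop)
  (act : B -> A -> A) (alpha : A -> B).

Definition sqL : GroupData := Pi0Group OA.
Definition sqM : GroupData := Pi0Group OB.
Definition sq_lam (x : sqL) : sqM := cls OB gzero (fun r => alpha (rep x r)).
Definition sq_lam' (x : sqL) : A := rep x I1.
Definition sq_mu (y : sqM) : B := rep y I1.
Definition sq_nu : A -> B := alpha.
Definition sq_aL (b : B) (x : sqL) : sqL := cls OA gzero (fun r => act b (rep x r)).
Definition sq_aM (b : B) (y : sqM) : sqM :=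
  cls OB gzero (fun r => gadd (gadd b (rep y r)) (gopp b)).
Definition sq_aN : B -> A -> A := act.
Definition sq_h (y : sqM) (a : A) : sqL :=
  cls OA gzero (fun r => gadd (act (rep y r) a) (gopp a)).
End Data.

(* All structure on classes of paths is defined pointwise, and pointwise operations respect
   homotopy rel endpoints, so every axiom that holds pointwise for representatives holds for
   classes.  The remaining axioms (the Peiffer identities for M and L, and the laws for
   h(m, lambda' l) and h(m + m', n)) compare a path with one in which some factor m(s) is
   frozen at its endpoint m(1).  They all follow from one lemma: if F : I x I -> X has F(-, 0)
   constant, then s |-> F(s, s) and s |-> F(1, s) are homotopic rel endpoints, through
   (s, t) |-> F(s + t - st, s). *)

From Stdlib Require Import Reals Lra Classical ClassicalEpsilon.
From Stdlib Require Import FunctionalExtensionality PropExtensionality ProofIrrelevance.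
Open Scope R_scope.

Lemma pred_ext {X : Type} (P Q : X -> Prop) : (forall x, P x <-> Q x) -> P = Q.
Proof.
  intros H. apply functional_extensionality; intros x.
  apply propositional_extensionality; auto.
Qed.

Lemma open_I_topology : is_topology open_I.
Proof.
  split; [|split].
  - exists (fun _ => True). split; [|tauto].
    intros x _. exists 1. split; [lra|auto].
  - intros F HF.
    exists (fun x => exists U W, F U /\ open_R W /\
                       (forall r : I, U r <-> W (proj1_sig r)) /\ W x).
    split.
    + intros x [U [W [HU [HW [HUW Wx]]]]].
      destruct (HW x Wx) as [e [He HWe]]. exists e. split; auto.
      intros y Hy. exists U, W. auto.
    + intros r. split.
      * intros [U [HU Ur]]. destruct (HF U HU) as [W [HW HUW]].
        exists U, W. split; [auto|split; [auto|split; [auto|apply HUW; auto]]].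
      * intros [U [W [HU [HW [HUW Wx]]]]]. exists U. split; auto. apply HUW; auto.
  - intros U V [W1 [H1 E1]] [W2 [H2 E2]].
    exists (fun x => W1 x /\ W2 x). split.
    + intros x [a b].
      destruct (H1 x a) as [e1 [He1 P1]]. destruct (H2 x b) as [e2 [He2 P2]].
      exists (Rmin e1 e2). split; [apply Rmin_pos; auto|]. intros y Hy. split.
      * apply P1. eapply Rlt_le_trans; [eauto|apply Rmin_l].
      * apply P2. eapply Rlt_le_trans; [eauto|apply Rmin_r].
    + intros r. rewrite E1, E2. tauto.
Qed.

Lemma prod_topology {X Y : Type} (OX : (X -> Prop) -> Prop) (OY : (Y -> Prop) -> Prop) :
  is_topology OX -> is_topology OY -> is_topology (open_prod OX OY).
Proof.
  intros [TX [_ IX]] [TY [_ IY]]. split; [|split].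
  - intros p _. exists (fun _ => True), (fun _ => True). repeat split; auto.
  - intros F HF p [U [HU Up]].
    destruct (HF U HU p Up) as [U1 [V1 [? [? [? [? Hb]]]]]].
    exists U1, V1. repeat split; auto. intros q0 a b. exists U. split; auto.
  - intros U V HU HV p [Up Vp].
    destruct (HU p Up) as [U1 [V1 [? [? [? [? Hb1]]]]]].
    destruct (HV p Vp) as [U2 [V2 [? [? [? [? Hb2]]]]]].
    exists (fun x => U1 x /\ U2 x), (fun y => V1 y /\ V2 y).
    split; [apply IX; auto|]. split; [apply IY; auto|].
    split; [split; auto|]. split; [split; auto|].
    intros q0 [] []. split; [apply Hb1|apply Hb2]; auto.
Qed.

Definition open_II := open_prod open_I open_I.

Lemma open_II_topology : is_topology open_II.
Proof. apply prod_topology; apply open_I_topology. Qed.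

Section Continuity.
Context {W X Y Z : Type} {OW : (W -> Prop) -> Prop} {OX : (X -> Prop) -> Prop}
  {OY : (Y -> Prop) -> Prop} {OZ : (Z -> Prop) -> Prop}.

Lemma continuous_id : continuous OX OX (fun x => x).
Proof. intros V HV; exact HV. Qed.

Lemma continuous_cst (c : Y) : is_topology OX -> continuous OX OY (fun _ => c).
Proof.
  intros [T [U _]] V _. destruct (classic (V c)) as [H|H].
  - replace (fun _ : X => V c) with (fun _ : X => True); auto. apply pred_ext; tauto.
  - replace (fun _ : X => V c) with (fun x : X => exists U0, (fun _ => False) U0 /\ U0 x).
    + apply U. intros _ [].
    + apply pred_ext; intros x; split; [intros [? [[] _]] | tauto].
Qed.

Lemma continuous_comp (f : X -> Y) (a : W -> X) :
  continuous OX OY f -> continuous OW OX a -> continuous OW OY (fun w => f (a w)).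
Proof. intros Hf Ha V HV. apply (Ha _ (Hf V HV)). Qed.

Lemma continuous_comp2 (F : X -> Y -> Z) (f : W -> X) (g : W -> Y) :
  is_topology OW -> continuous (open_prod OX OY) OZ (fun p => F (fst p) (snd p)) ->
  continuous OW OX f -> continuous OW OY g -> continuous OW OZ (fun w => F (f w) (g w)).
Proof.
  intros [_ [UW IW]] HF Hf Hg V HV.
  specialize (HF V HV). cbv beta in HF.
  set (Fam := fun S : W -> Prop => exists U U', OX U /\ OY U' /\
     (forall q, U (fst q) -> U' (snd q) -> V (F (fst q) (snd q))) /\
     S = (fun w => U (f w) /\ U' (g w))).
  replace (fun w => V (F (f w) (g w))) with (fun w => exists S, Fam S /\ S w).
  - apply UW. intros S [U [U' [HU [HU' [_ ->]]]]]. apply IW; [apply Hf|apply Hg]; auto.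
  - apply pred_ext; intro w; split.
    + intros [S [[U [U' [_ [_ [Hb ->]]]]] [a b]]]. apply (Hb (f w, g w)); auto.
    + intros Hw. destruct (HF (f w, g w) Hw) as [U [U' [HU [HU' [a [b Hb]]]]]].
      exists (fun w => U (f w) /\ U' (g w)). split; [exists U, U'; auto | auto].
Qed.

Lemma continuous_fst : is_topology OY -> continuous (open_prod OX OY) OX fst.
Proof. intros [TY _] V HV p Vp. exists V, (fun _ => True). repeat split; auto. Qed.

Lemma continuous_snd : is_topology OX -> continuous (open_prod OX OY) OY snd.
Proof. intros [TX _] V HV p Vp. exists (fun _ => True), V. repeat split; auto. Qed.

End Continuity.

Lemma continuous_pair {W X Y : Type} (OW : (W -> Prop) -> Prop)
  (OX : (X -> Prop) -> Prop) (OY : (Y -> Prop) -> Prop) (f : W -> X) (g : W -> Y) :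
  is_topology OW -> continuous OW OX f -> continuous OW OY g ->
  continuous OW (open_prod OX OY) (fun w => (f w, g w)).
Proof.
  intros TW Cf Cg. apply (continuous_comp2 (OX := OX) (OY := OY) pair); auto.
  intros V HV. replace (fun x : X * Y => V (fst x, snd x)) with V; auto.
  apply pred_ext; intros [a b]; simpl; tauto.
Qed.


Lemma I_eq (x y : I) : proj1_sig x = proj1_sig y -> x = y.
Proof. destruct x, y; simpl; intros ->; f_equal; apply proof_irrelevance. Qed.

Lemma open_I_ball (a e : R) : open_I (fun r : I => Rabs (proj1_sig r - a) < e).
Proof.
  exists (fun x => Rabs (x - a) < e). split; [|intros; tauto].
  intros x Hx. exists (e - Rabs (x - a)). split; [lra|]. intros y Hy.
  pose proof (Rabs_triang (y - x) (x - a)) as T.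
  replace (y - x + (x - a)) with (y - a) in T by ring. lra.
Qed.

Lemma lipschitz_continuous_II (f : I * I -> I) :
  (forall p q, Rabs (proj1_sig (f p) - proj1_sig (f q)) <=
     Rabs (proj1_sig (fst p) - proj1_sig (fst q)) +
     Rabs (proj1_sig (snd p) - proj1_sig (snd q))) ->
  continuous open_II open_I f.
Proof.
  intros Hf V [W [HW EV]] p Vp.
  apply EV in Vp. destruct (HW _ Vp) as [e [He HWe]].
  exists (fun r : I => Rabs (proj1_sig r - proj1_sig (fst p)) < e/2),
         (fun r : I => Rabs (proj1_sig r - proj1_sig (snd p)) < e/2).
  repeat split; try apply open_I_ball;
    try (unfold Rminus; rewrite Rplus_opp_r, Rabs_R0; lra).
  intros q a b. apply EV, HWe. specialize (Hf q p). lra.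
Qed.

Definition prob_sum (p : I * I) : I.
Proof.
  destruct p as [[s Hs] [t Ht]]. exists (s + t - s * t). nra.
Defined.

Lemma prob_sum_val (s t : I) :
  proj1_sig (prob_sum (s, t)) = proj1_sig s + proj1_sig t - proj1_sig s * proj1_sig t.
Proof. destruct s, t; reflexivity. Qed.

Lemma prob_sum_s0 s : prob_sum (s, I0) = s.
Proof. apply I_eq. rewrite prob_sum_val. simpl. ring. Qed.
Lemma prob_sum_s1 s : prob_sum (s, I1) = I1.
Proof. apply I_eq. rewrite prob_sum_val. simpl. ring. Qed.
Lemma prob_sum_0t t : prob_sum (I0, t) = t.
Proof. apply I_eq. rewrite prob_sum_val. simpl. ring. Qed.
Lemma prob_sum_1t t : prob_sum (I1, t) = I1.
Proof. apply I_eq. rewrite prob_sum_val. simpl. ring. Qed.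

Lemma prob_sum_continuous : continuous open_II open_I prob_sum.
Proof.
  apply lipschitz_continuous_II. intros [[s Hs] [t Ht]] [[s' Hs'] [t' Ht']].
  rewrite !prob_sum_val; simpl.
  replace (s + t - s * t - (s' + t' - s' * t')) with ((s - s') * (1 - t) + (t - t') * (1 - s'))
    by ring.
  eapply Rle_trans; [apply Rabs_triang|]. rewrite !Rabs_mult.
  rewrite (Rabs_pos_eq (1 - t)), (Rabs_pos_eq (1 - s')) by lra.
  pose proof (Rabs_pos (s - s')). pose proof (Rabs_pos (t - t')). nra.
Qed.

Section Group.
Variable X : GroupData.
Hypothesis G : is_group X.

Lemma gaddA (x y z : X) : gadd x (gadd y z) = gadd (gadd x y) z.
Proof. apply G. Qed.
Lemma gadd0l (x : X) : gadd gzero x = x. Proof. apply G. Qed.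
Lemma gadd0r (x : X) : gadd x gzero = x. Proof. apply G. Qed.
Lemma gaddNl (x : X) : gadd (gopp x) x = gzero. Proof. apply G. Qed.
Lemma gaddNr (x : X) : gadd x (gopp x) = gzero. Proof. apply G. Qed.
Lemma gaddNK (x y : X) : gadd (gadd x (gopp y)) y = x.
Proof. rewrite <- gaddA, gaddNl, gadd0r. reflexivity. Qed.
Lemma gaddKN (x y : X) : gadd (gadd x y) (gopp y) = x.
Proof. rewrite <- gaddA, gaddNr, gadd0r. reflexivity. Qed.
Lemma gaddKl (x y : X) : gadd (gopp x) (gadd x y) = y.
Proof. rewrite gaddA, gaddNl, gadd0l. reflexivity. Qed.
Lemma gopp_unique (x y : X) : gadd x y = gzero -> y = gopp x.
Proof. intros H. rewrite <- (gaddKl x y), H, gadd0r. reflexivity. Qed.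
Lemma gopp0 : gopp (@gzero X) = gzero.
Proof. symmetry. apply gopp_unique, gadd0l. Qed.
Lemma goppK (x : X) : gopp (gopp x) = x.
Proof. symmetry. apply gopp_unique, gaddNl. Qed.
Lemma goppD (x y : X) : gopp (gadd x y) = gadd (gopp y) (gopp x).
Proof. symmetry. apply gopp_unique. rewrite gaddA, gaddKN, gaddNr. reflexivity. Qed.
Lemma gidem_zero (x : X) : gadd x x = x -> x = gzero.
Proof. intros H. rewrite <- (gaddKl x x), H, gaddNl. reflexivity. Qed.

End Group.

Definition is_topological_group (X : GroupData) (OX : (X -> Prop) -> Prop) : Prop :=
  is_group X /\ is_topology OX /\
  continuous (open_prod OX OX) OX (fun p => gadd (fst p) (snd p)) /\
  continuous OX OX gopp.

Section TopologicalGroup.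
Context {X : GroupData} {OX : (X -> Prop) -> Prop}.
Hypothesis T : is_topological_group X OX.

Lemma topgrp_group : is_group X. Proof. apply T. Qed.
Lemma topgrp_topology : is_topology OX. Proof. apply T. Qed.
Lemma topgrp_add : continuous (open_prod OX OX) OX (fun p => gadd (fst p) (snd p)).
Proof. apply T. Qed.
Lemma topgrp_opp : continuous OX OX gopp. Proof. apply T. Qed.

Lemma continuous_gadd {W : Type} (OW : (W -> Prop) -> Prop) (f g : W -> X) :
  is_topology OW -> continuous OW OX f -> continuous OW OX g ->
  continuous OW OX (fun w => gadd (f w) (g w)).
Proof. intros. eapply continuous_comp2; [auto | apply topgrp_add | eauto | eauto]. Qed.

Lemma continuous_gopp {W : Type} (OW : (W -> Prop) -> Prop) (f : W -> X) :
  continuous OW OX f -> continuous OW OX (fun w => gopp (f w)).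
Proof. intros. eapply continuous_comp; [apply topgrp_opp | eauto]. Qed.

End TopologicalGroup.

Lemma rep_spec {X : Type} {OX : (X -> Prop) -> Prop} {z : X} (x : Pi0 OX z) :
  path0 OX z (rep x) /\ proj1_sig x = homotopic OX (rep x).
Proof.
  unfold rep. destruct (constructive_indefinite_description _ _) as [g Hg]. exact Hg.
Qed.

Lemma rep_continuous {X : Type} {OX : (X -> Prop) -> Prop} {z : X} (x : Pi0 OX z) :
  continuous open_I OX (rep x).
Proof. apply rep_spec. Qed.

Lemma rep_I0 {X : Type} {OX : (X -> Prop) -> Prop} {z : X} (x : Pi0 OX z) : rep x I0 = z.
Proof. apply rep_spec. Qed.

Ltac solve_topology :=
  first [ apply open_I_topology | apply open_II_topology
        | eapply topgrp_topology; eassumption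
        | apply prod_topology; solve_topology | assumption ].

Ltac solve_continuous :=
  match goal with
  | |- continuous _ _ _ => eassumption
  | |- continuous _ _ (fun _ => ?c) => apply continuous_cst; solve_topology
  | |- continuous _ _ (fun w => w) => apply continuous_id
  | |- continuous _ _ (fun w => @gadd _ (@?a w) (@?b w)) =>
      eapply continuous_gadd; [eassumption | solve_topology | solve_continuous | solve_continuous]
  | |- continuous _ _ (fun w => @gopp _ (@?a w)) =>
      eapply continuous_gopp; [eassumption | solve_continuous]
  | |- continuous _ _ (fun w => ?f (@?a w) (@?b w)) =>
      eapply continuous_comp2; [solve_topology | eassumption | solve_continuous | solve_continuous]
  | |- continuous _ _ (fun w => ?f (@?a w)) =>
      eapply continuous_comp;
      [ first [ eassumption | apply continuous_fst; solve_topology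
              | apply continuous_snd; solve_topology | apply prob_sum_continuous
              | apply rep_continuous | eapply topgrp_opp; eassumption ]
      | solve_continuous ]
  | |- continuous _ _ ?f =>
      first [ apply continuous_fst; solve_topology | apply continuous_snd; solve_topology
            | apply prob_sum_continuous | apply rep_continuous
            | eapply topgrp_opp; eassumption | eapply topgrp_add; eassumption ]
  end.

Section Homotopy.
Context {X : Type} (OX : (X -> Prop) -> Prop).

Lemma homotopic_refl (g : I -> X) : continuous open_I OX g -> homotopic OX g g.
Proof.
  intros Cg. exists (fun p => g (fst p)). split; [solve_continuous|].
  repeat split; reflexivity.
Qed.

Lemma homotopic_of_eq (g d : I -> X) :
  continuous open_I OX g -> (forall r, g r = d r) -> homotopic OX g d.
Proof.
  intros C E. replace d with g by (apply functional_extensionality; auto).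
  apply homotopic_refl; auto.
Qed.

Lemma homotopic_endpoints (g d : I -> X) :
  homotopic OX g d -> d I0 = g I0 /\ d I1 = g I1.
Proof.
  intros [H [_ [_ [Hd [H0 H1]]]]]. split.
  - rewrite <- (Hd I0); apply H0.
  - rewrite <- (Hd I1); apply H1.
Qed.

Lemma homotopic_map {Y : Type} (OY : (Y -> Prop) -> Prop) (f : X -> Y) (g d : I -> X) :
  continuous OX OY f -> homotopic OX g d -> homotopic OY (fun r => f (g r)) (fun r => f (d r)).
Proof.
  intros Cf [H [C [a [b [c e]]]]]. exists (fun p => f (H p)). split; [solve_continuous|].
  repeat split; intros; simpl; [rewrite a|rewrite b|rewrite c|rewrite e]; reflexivity.
Qed.

Lemma homotopic_map2 {Y Z : Type} (OY : (Y -> Prop) -> Prop) (OZ : (Z -> Prop) -> Prop)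
  (F : X -> Y -> Z) (g d : I -> X) (g' d' : I -> Y) :
  continuous (open_prod OX OY) OZ (fun p => F (fst p) (snd p)) ->
  homotopic OX g d -> homotopic OY g' d' ->
  homotopic OZ (fun r => F (g r) (g' r)) (fun r => F (d r) (d' r)).
Proof.
  intros CF [H [C [a [b [c e]]]]] [H' [C' [a' [b' [c' e']]]]].
  exists (fun p => F (H p) (H' p)). split; [solve_continuous|].
  repeat split; intros; simpl;
    [rewrite a, a'|rewrite b, b'|rewrite c, c'|rewrite e, e']; reflexivity.
Qed.

(* The homotopy [(s, t) |-> F (prob_sum (s, t)) s] slides the diagonal onto the edge
   [u = 1]; the side [s = 0] stays at [F t I0], which is why this must be constant. *)
Lemma homotopic_diag (F : I -> I -> X) :
  continuous open_II OX (fun p => F (fst p) (snd p)) -> (forall t, F t I0 = F I0 I0) ->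
  homotopic OX (fun s => F s s) (fun s => F I1 s).
Proof.
  intros CF HF. exists (fun p => F (prob_sum p) (fst p)). split.
  - apply (continuous_comp (OX := open_II) (fun q => F (fst q) (snd q))
                            (fun p => (prob_sum p, fst p))); auto.
    apply continuous_pair;
      [apply open_II_topology | apply prob_sum_continuous
      | apply continuous_fst, open_I_topology].
  - cbn [fst snd]. repeat split; intros;
      rewrite ?prob_sum_s0, ?prob_sum_s1, ?prob_sum_0t, ?prob_sum_1t; auto.
Qed.

End Homotopy.

Section PathClasses.
Context {X : GroupData} {OX : (X -> Prop) -> Prop}.
Hypothesis T : is_topological_group X OX.

(* Homotopies rel endpoints compose pointwise, as [H1 - h + H2], so no concatenation of
   homotopies is needed. *)
Lemma homotopic_trans (g h k : I -> X) : continuous open_I OX h ->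
  homotopic OX g h -> homotopic OX h k -> homotopic OX g k.
Proof.
  intros Ch H1' H2'.
  destruct (homotopic_endpoints _ _ _ H1') as [e0 e1].
  destruct H1' as [H1 [C1 [a1 [b1 [c1 d1]]]]].
  destruct H2' as [H2 [C2 [a2 [b2 [c2 d2]]]]].
  pose proof (topgrp_group T) as G.
  exists (fun p => gadd (gadd (H1 p) (gopp (h (fst p)))) (H2 p)).
  split; [solve_continuous|]. simpl.
  split; [intros s; rewrite a1, a2; apply gaddNK; auto|].
  split; [intros s; rewrite b1, b2, gaddNr, gadd0l; auto|].
  split; intros t; [rewrite c1, c2, e0 | rewrite d1, d2, e1]; apply gaddNK; auto.
Qed.

Lemma homotopic_sym (g h : I -> X) : continuous open_I OX g -> continuous open_I OX h ->
  homotopic OX g h -> homotopic OX h g.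
Proof.
  intros Cg Ch H1'.
  destruct (homotopic_endpoints _ _ _ H1') as [e0 e1].
  destruct H1' as [H [C [a [b [c d]]]]].
  pose proof (topgrp_group T) as G.
  exists (fun p => gadd (gadd (g (fst p)) (gopp (H p))) (h (fst p))).
  split; [solve_continuous|]. simpl.
  split; [intros s; rewrite a, gaddNr, gadd0l; auto|].
  split; [intros s; rewrite b; apply gaddNK; auto|].
  split; intros t; [rewrite c | rewrite d]; rewrite gaddNr, gadd0l; auto.
Qed.

Lemma proj_cls (z : X) (g : I -> X) :
  path0 OX z g -> proj1_sig (cls OX z g) = homotopic OX g.
Proof.
  intros Hg. unfold cls. destruct excluded_middle_informative; [reflexivity|contradiction].
Qed.

Lemma Pi0_eq (z : X) (x y : Pi0 OX z) : proj1_sig x = proj1_sig y -> x = y.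
Proof. destruct x, y; simpl; intros ->; f_equal; apply proof_irrelevance. Qed.

Lemma cls_homotopic (z : X) (g d : I -> X) :
  path0 OX z g -> path0 OX z d -> homotopic OX g d -> cls OX z g = cls OX z d.
Proof.
  intros Pg Pd Hgd. apply Pi0_eq. rewrite !proj_cls by auto.
  destruct Pg as [Cg _], Pd as [Cd _].
  apply pred_ext; intros k; split; intros Hk.
  - apply (homotopic_trans d g k); auto. apply homotopic_sym; auto.
  - apply (homotopic_trans g d k); auto.
Qed.

Lemma cls_rep (z : X) (x : Pi0 OX z) : cls OX z (rep x) = x.
Proof. apply Pi0_eq. destruct (rep_spec x) as [P E]. rewrite proj_cls; auto. Qed.

Lemma rep_cls_homotopic (z : X) (g : I -> X) :
  path0 OX z g -> homotopic OX (rep (cls OX z g)) g.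
Proof.
  intros Pg. destruct (rep_spec (cls OX z g)) as [P E]. rewrite proj_cls in E by auto.
  rewrite <- E. apply homotopic_refl, Pg.
Qed.

Lemma Pi0_zero_cls (z : X) : Pi0_zero OX z = cls OX z (fun _ => z).
Proof.
  apply Pi0_eq. rewrite proj_cls; [reflexivity|].
  split; [apply const_continuous|reflexivity].
Qed.

Lemma homotopic_rep_cls_l (z : X) (g Q : I -> X) : path0 OX z g -> continuous open_I OX Q ->
  homotopic OX g Q -> homotopic OX (fun r => rep (cls OX z g) r) Q.
Proof.
  intros Pg CQ H. apply (homotopic_trans _ g); auto; [apply Pg|].
  apply rep_cls_homotopic; auto.
Qed.

Lemma rep_cls_I1 (z : X) (g : I -> X) : path0 OX z g -> rep (cls OX z g) I1 = g I1.
Proof.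
  intros Pg. symmetry. apply (homotopic_endpoints _ _ _ (rep_cls_homotopic _ _ Pg)).
Qed.

End PathClasses.

Ltac solve_group := first [ assumption | eapply topgrp_group; eassumption ].

Hint Rewrite @rep_I0 : path_zero.
Hint Rewrite gadd0l gadd0r gaddNl gaddNr gopp0 using solve_group : path_zero.

Ltac simpl_zero := autorewrite with path_zero; try reflexivity.

Ltac solve_path0 := split; [solve_continuous | cbv beta; solve [simpl_zero]].

(* [strip P] replaces every [rep (cls g)] in the path expression [P] by [g]; the two are
   homotopic, and homotopy is a congruence for pointwise operations. *)
Ltac strip P :=
  match P with
  | context C [rep (cls ?O ?z ?g)] =>
      let P' := context C [g] in let P'' := eval cbv beta in P' in strip P''
  | _ => P
  end.

Ltac homotopic_congr :=
  match goal with
  | |- homotopic _ ?P ?P => apply homotopic_refl; solve_continuous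
  | |- homotopic _ (fun r => rep (cls ?O ?z ?g) r) _ =>
      eapply homotopic_rep_cls_l; [eassumption | solve_path0 | solve_continuous | homotopic_congr]
  | |- homotopic _ (rep (cls ?O ?z ?g)) _ =>
      eapply homotopic_rep_cls_l; [eassumption | solve_path0 | solve_continuous | homotopic_congr]
  | |- homotopic _ (fun r => ?F (@?a r) (@?b r)) (fun s => ?F (@?c s) (@?d s)) =>
      eapply (homotopic_map2 _ _ _ F a c b d);
      [solve_continuous | homotopic_congr | homotopic_congr]
  | |- homotopic _ (fun r => ?f (@?a r)) (fun s => ?f (@?c s)) =>
      eapply (homotopic_map _ _ f a c); [solve_continuous | homotopic_congr]
  end.

Ltac homotopic_strip :=
  match goal with
  | |- homotopic ?O ?P ?Q =>
    let P' := strip P in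
    let Q' := strip Q in
    refine (homotopic_trans _ P P' Q _ _ _);
    [ eassumption | solve_continuous | homotopic_congr
    | refine (homotopic_trans _ P' Q' Q _ _ _);
      [ eassumption | solve_continuous |
      | refine (homotopic_sym _ Q Q' _ _ _);
        [ eassumption | solve_continuous | solve_continuous | homotopic_congr ] ] ]
  end.

Ltac homotopic_pointwise := apply homotopic_of_eq; [solve_continuous | intro; cbv beta].

Ltac cls_congr :=
  eapply cls_homotopic; [eassumption | solve_path0 | solve_path0 | homotopic_strip].

Lemma Pi0Group_is_group (X : GroupData) (OX : (X -> Prop) -> Prop) :
  is_topological_group X OX -> is_group (Pi0Group OX).
Proof.
  intros T. pose proof (topgrp_group T) as G.
  split; [|split]; intros x; simpl.
  - intros y z. cls_congr. homotopic_pointwise. apply gaddA; auto.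
  - rewrite Pi0_zero_cls.
    split; transitivity (cls OX gzero (rep x)); try apply cls_rep; cls_congr;
      homotopic_pointwise; [apply gadd0l | apply gadd0r]; auto.
  - rewrite Pi0_zero_cls. split; cls_congr; homotopic_pointwise;
      [apply gaddNl | apply gaddNr]; auto.
Qed.

Ltac group_norm :=
  repeat first [ rewrite goppD by solve_group | rewrite goppK by solve_group
               | rewrite gopp0 by solve_group ];
  repeat rewrite gaddA by solve_group;
  repeat first [ rewrite gaddKN by solve_group | rewrite gaddNK by solve_group
               | rewrite gadd0l by solve_group | rewrite gadd0r by solve_group
               | rewrite gaddNl by solve_group | rewrite gaddNr by solve_group ].

Section ConjugationCrossedModule.
Context {X : GroupData} {OX : (X -> Prop) -> Prop}.
Hypothesis T : is_topological_group X OX.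

(* Pointwise the sides are [y(1) + y'(s) - y(1)] and [y(s) + y'(s) - y(s)]. *)
Lemma sq_aM_peiffer (y y' : sqM X OX) :
  sq_aM X OX (sq_mu X OX y) y' = gadd (gadd y y') (gopp y).
Proof.
  pose proof (topgrp_group T) as G.
  unfold sq_aM, sq_mu, sqM; simpl. cls_congr.
  apply homotopic_sym; [eassumption | solve_continuous | solve_continuous |].
  apply (homotopic_diag OX (fun u s => gadd (gadd (rep y u) (rep y' s)) (gopp (rep y u)))).
  - solve_continuous.
  - intros t; cbv beta; simpl_zero.
Qed.

Lemma crossed_module_sqM : crossed_module (sqM X OX) X (sq_aM X OX) (sq_mu X OX).
Proof.
  pose proof (topgrp_group T) as G.
  split; [apply Pi0Group_is_group; auto|]. split; [auto|].
  split; [|split; [|split; [|split; [|split]]]]; [..|apply sq_aM_peiffer];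
    unfold sq_aM, sq_mu, sqM; simpl.
  - intros y. transitivity (cls OX gzero (rep y)); [|apply cls_rep].
    cls_congr. homotopic_pointwise. group_norm. reflexivity.
  - intros. cls_congr. homotopic_pointwise. group_norm. reflexivity.
  - intros. cls_congr. homotopic_pointwise. group_norm. reflexivity.
  - intros y y'; simpl. rewrite rep_cls_I1 by solve_path0. reflexivity.
  - intros. rewrite rep_cls_I1 by solve_path0. reflexivity.
Qed.

End ConjugationCrossedModule.

Section PathCrossedSquare.
Variables (A B : GroupData) (OA : (A -> Prop) -> Prop) (OB : (B -> Prop) -> Prop)
  (act : B -> A -> A) (alpha : A -> B).
Hypotheses (GA : is_group A) (GB : is_group B)
  (act0 : forall a, act gzero a = a)
  (actM : forall b b' a, act (gadd b b') a = act b (act b' a))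
  (actD : forall b a a', act b (gadd a a') = gadd (act b a) (act b a'))
  (alphaD : is_hom alpha)
  (alpha_act : forall b a, alpha (act b a) = gadd (gadd b (alpha a)) (gopp b))
  (act_alpha : forall a a', act (alpha a) a' = gadd (gadd a a') (gopp a))
  (TA : is_topological_group A OA) (TB : is_topological_group B OB)
  (Calpha : continuous OA OB alpha)
  (Cact : continuous (open_prod OB OA) OA (fun p => act (fst p) (snd p))).

Lemma act_zero b : act b gzero = gzero.
Proof. apply gidem_zero; auto. rewrite <- actD, gadd0l; auto. Qed.

Lemma alpha_zero : alpha gzero = gzero.
Proof. apply gidem_zero; auto. rewrite <- alphaD, gadd0l; auto. Qed.

Lemma act_opp b a : act b (gopp a) = gopp (act b a).
Proof. apply gopp_unique; auto. rewrite <- actD, gaddNr, act_zero; auto. Qed.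

Lemma alpha_opp a : alpha (gopp a) = gopp (alpha a).
Proof. apply gopp_unique; auto. rewrite <- alphaD, gaddNr, alpha_zero; auto. Qed.

Hint Rewrite act_zero act0 alpha_zero : path_zero.

Lemma crossed_module_sqL :
  crossed_module (sqL A OA) B (sq_aL A B OA act) (fun l => alpha (sq_lam' A OA l)).
Proof.
  split; [apply Pi0Group_is_group; auto|]. split; [auto|].
  unfold sq_aL, sq_lam', sqL; simpl.
  split; [|split; [|split; [|split; [|split]]]].
  - intros l. transitivity (cls OA gzero (rep l)); [|apply cls_rep].
    cls_congr. homotopic_pointwise. apply act0.
  - intros. cls_congr. homotopic_pointwise. apply actM.
  - intros. cls_congr. homotopic_pointwise. apply actD.
  - intros l l'; simpl. rewrite rep_cls_I1 by solve_path0. apply alphaD.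
  - intros. rewrite rep_cls_I1 by solve_path0. apply alpha_act.
  - intros l l'. cls_congr.
    replace (fun r => act (alpha (rep l I1)) (rep l' r))
      with (fun r => gadd (gadd (rep l I1) (rep l' r)) (gopp (rep l I1)))
      by (apply functional_extensionality; intros; rewrite act_alpha; reflexivity).
    apply homotopic_sym; [eassumption | solve_continuous | solve_continuous |].
    apply (homotopic_diag OA (fun u s => gadd (gadd (rep l u) (rep l' s)) (gopp (rep l u)))).
    + solve_continuous.
    + intros t; cbv beta; simpl_zero.
Qed.

Lemma sq_lam_hom : is_hom (sq_lam A B OA OB alpha).
Proof.
  intros l l'. unfold sq_lam; simpl.
  cls_congr. homotopic_pointwise. apply alphaD.
Qed.

Lemma sq_lam'_hom : is_hom (sq_lam' A OA).
Proof. intros l l'. unfold sq_lam'; simpl. rewrite rep_cls_I1 by solve_path0. reflexivity. Qed.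

Lemma sq_nu_lam' (l : sqL A OA) :
  sq_nu A B alpha (sq_lam' A OA l) = sq_mu B OB (sq_lam A B OA OB alpha l).
Proof. unfold sq_mu, sq_lam, sq_nu, sq_lam'. rewrite rep_cls_I1 by solve_path0. reflexivity. Qed.

Lemma sq_lam_act (b : B) (l : sqL A OA) :
  sq_lam A B OA OB alpha (sq_aL A B OA act b l) = sq_aM B OB b (sq_lam A B OA OB alpha l).
Proof.
  unfold sq_lam, sq_aL, sq_aM. cls_congr. homotopic_pointwise. apply alpha_act.
Qed.

Lemma sq_lam'_act (b : B) (l : sqL A OA) :
  sq_lam' A OA (sq_aL A B OA act b l) = sq_aN A B act b (sq_lam' A OA l).
Proof. unfold sq_lam', sq_aL, sq_aN. rewrite rep_cls_I1 by solve_path0. reflexivity. Qed.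

Lemma sq_lam_h (m : sqM B OB) (n : A) :
  sq_lam A B OA OB alpha (sq_h A B OA OB act m n) =
  gadd m (sq_aM B OB (sq_nu A B alpha n) (gopp m)).
Proof.
  unfold sq_lam, sq_h, sq_aM, sq_nu; simpl. cls_congr. homotopic_pointwise.
  rewrite alphaD, alpha_act, alpha_opp. group_norm. reflexivity.
Qed.

Lemma sq_lam'_h (m : sqM B OB) (n : A) :
  sq_lam' A OA (sq_h A B OA OB act m n) = gadd (sq_aN A B act (sq_mu B OB m) n) (gopp n).
Proof. unfold sq_lam', sq_h, sq_aN, sq_mu. rewrite rep_cls_I1 by solve_path0. reflexivity. Qed.

Lemma sq_h_lam (l : sqL A OA) (n : A) :
  sq_h A B OA OB act (sq_lam A B OA OB alpha l) n =
  gadd l (sq_aL A B OA act (sq_nu A B alpha n) (gopp l)).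
Proof.
  unfold sq_h, sq_lam, sq_aL, sq_nu; simpl. cls_congr. homotopic_pointwise.
  rewrite !act_alpha. group_norm. reflexivity.
Qed.

(* Both sides are homotopic to the diagonal path [s |-> m(s) . l(s) - l(s)]. *)
Lemma sq_h_lam' (m : sqM B OB) (l : sqL A OA) :
  sq_h A B OA OB act m (sq_lam' A OA l) =
  gadd (sq_aL A B OA act (sq_mu B OB m) l) (gopp l).
Proof.
  unfold sq_h, sq_lam', sq_aL, sq_mu; simpl. cls_congr.
  apply (homotopic_trans TA _ (fun s => gadd (act (rep m s) (rep l s)) (gopp (rep l s))));
    [solve_continuous | |].
  - apply homotopic_sym; [eassumption | solve_continuous | solve_continuous |].
    apply (homotopic_diag OA (fun u v => gadd (act (rep m v) (rep l u)) (gopp (rep l u)))).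
    + solve_continuous.
    + intros t; cbv beta; simpl_zero.
  - apply (homotopic_diag OA (fun u v => gadd (act (rep m u) (rep l v)) (gopp (rep l v)))).
    + solve_continuous.
    + intros t; cbv beta; simpl_zero.
Qed.

(* After inserting [- m(s) . n + m(s) . n] on the left, both sides are the diagonal and the
   edge [u = 1] of [(u, s) |-> (m(u) + m'(s)) . n - m(u) . n + m(s) . n - n]. *)
Lemma sq_h_addl (m m' : sqM B OB) (n : A) :
  sq_h A B OA OB act (gadd m m') n =
  gadd (sq_aL A B OA act (sq_mu B OB m) (sq_h A B OA OB act m' n)) (sq_h A B OA OB act m n).
Proof.
  unfold sq_h, sq_aL, sq_mu; simpl. cls_congr.
  replace (fun s => gadd (act (gadd (rep m s) (rep m' s)) n) (gopp n))
    with (fun s => gadd (gadd (gadd (act (gadd (rep m s) (rep m' s)) n)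
                 (gopp (act (rep m s) n))) (act (rep m s) n)) (gopp n))
    by (apply functional_extensionality; intros; rewrite gaddNK by solve_group; reflexivity).
  replace (fun s => gadd (act (rep m I1) (gadd (act (rep m' s) n) (gopp n)))
                         (gadd (act (rep m s) n) (gopp n)))
    with (fun s => gadd (gadd (gadd (act (gadd (rep m I1) (rep m' s)) n)
                 (gopp (act (rep m I1) n))) (act (rep m s) n)) (gopp n))
    by (apply functional_extensionality; intros;
        rewrite actD, act_opp, <- actM; group_norm; reflexivity).
  apply (homotopic_diag OA (fun u s => gadd (gadd (gadd (act (gadd (rep m u) (rep m' s)) n)
                 (gopp (act (rep m u) n))) (act (rep m s) n)) (gopp n))).
  - solve_continuous.
  - intros t; cbv beta; simpl_zero.
Qed.

Lemma sq_h_addr (m : sqM B OB) (n n' : A) :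
  sq_h A B OA OB act m (gadd n n') =
  gadd (sq_h A B OA OB act m n) (sq_aL A B OA act (sq_nu A B alpha n) (sq_h A B OA OB act m n')).
Proof.
  unfold sq_h, sq_aL, sq_nu; simpl. cls_congr. homotopic_pointwise.
  rewrite !actD, !act_alpha. group_norm. reflexivity.
Qed.

Lemma sq_h_act (b : B) (m : sqM B OB) (n : A) :
  sq_h A B OA OB act (sq_aM B OB b m) (sq_aN A B act b n) =
  sq_aL A B OA act b (sq_h A B OA OB act m n).
Proof.
  unfold sq_h, sq_aM, sq_aN, sq_aL; simpl. cls_congr. homotopic_pointwise.
  rewrite <- actM, gaddNK by solve_group. rewrite actD, act_opp, <- actM. reflexivity.
Qed.

End PathCrossedSquare.

Theorem mainTheorem11 (A B : GroupData)
  (OA : (A -> Prop) -> Prop) (OB : (B -> Prop) -> Prop)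
  (act : B -> A -> A) (alpha : A -> B) :
  topological_crossed_module A B OA OB act alpha ->
  crossed_square (sqL A OA) (sqM B OB) A B
    (sq_lam A B OA OB alpha) (sq_lam' A OA) (sq_mu B OB) (sq_nu A B alpha)
    (sq_aL A B OA act) (sq_aM B OB) (sq_aN A B act) (sq_h A B OA OB act).
Proof.
  intros [Hcm [TopA [TopB [CaddA [CoppA [CaddB [CoppB [Calpha Cact]]]]]]]].
  pose proof Hcm as (GA & GB & act0 & actM & actD & alphaD & alpha_act & act_alpha).
  assert (TA : is_topological_group A OA) by exact (conj GA (conj TopA (conj CaddA CoppA))).
  assert (TB : is_topological_group B OB) by exact (conj GB (conj TopB (conj CaddB CoppB))).
  unfold crossed_square; cbv zeta.
  replace (fun l => sq_mu B OB (sq_lam A B OA OB alpha l))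
    with (fun l => alpha (sq_lam' A OA l))
    by (apply functional_extensionality; intros; eapply sq_nu_lam'; eauto).
  repeat match goal with |- _ /\ _ => split end;
    eauto using sq_lam_hom, sq_lam'_hom, sq_nu_lam', sq_lam_act, sq_lam'_act,
      crossed_module_sqM, crossed_module_sqL, sq_lam_h, sq_lam'_h, sq_h_lam, sq_h_lam',
      sq_h_addl, sq_h_addr, sq_h_act.
Qed.
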